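(* Let $G$, $P$, $n$, $\alpha$, $n'$, $\zeta$, $\mathcal C_{\mathrm{pool}}$ and $P(\mathbf c)$ be as in the context. For any two codewords $\mathbf c,\mathbf c'\in\mathcal C_{\mathrm{pool}}$, $$\frac{P(\mathbf c)}{P(\mathbf c')}\le 2^{-2n\alpha\zeta\sum_{e\in E}\log_2 p(\tau(e)\mid\sigma(e))}.$$
   Context: $G=(V,E,L)$ is a deterministic, lossless, primitive labeled directed graph over a finite alphabet $\Sigma$; edge $e$ has initial vertex $\sigma(e)$, terminal vertex $\tau(e)$, label $L(e)$. $P$ is a probability mass function on $E$ with $P(e)>0$ for all $e$, stationary: with $\pi(u)=\sum_{e:\sigma(e)=u}P(e)$, $\pi(u)=\sum_{e:\tau(e)=u}P(e)$. Write $p(\tau(e)\mid\sigma(e))=P(e)/\pi(\sigma(e))$; $P_{\min}=\min_eP(e)$. $n$ is a positive integer with $nP(e)\in\mathbb Z$ for all $e$; $\alpha\in(0,1)$, $n'=\lfloor\alpha n\rfloor$, $0<\zeta<\frac{1-\alpha}{\alpha}P_{\min}$, $v_{\mathrm{root}}\in V$ fixed. $\mathcal W$ is the set of paths $\mathbf w=(e_1,\dots,e_{n'})$ with $\sigma(e_1)=v_{\mathrm{root}}$ and $|S_{\mathbf w}(e)/n'-P(e)|<\zeta$ for all $e$, where $S_{\mathbf w}(e)$ counts occurrences of $e$ in $\mathbf w$. For $\mathbf w\in\mathcal W$ ending at $v_{\mathrm{end}}$, the multigraph with $nP(e)-S_{\mathbf w}(e)>0$ copies of each $e$ has an Eulerian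 path from $v_{\mathrm{end}}$ to $v_{\mathrm{root}}$; $\Phi(\mathbf w)$ is the lexicographically first. $\mathcal C_{\mathrm{pool}}=\{L(\mathbf w\|\Phi(\mathbf w)):\mathbf w\in\mathcal W\}$; each codeword $\mathbf c$ has a unique prefix $\mathbf w$, and $P(\mathbf c)=\prod_{i=1}^{n'}p(\tau(e_i)\mid\sigma(e_i))$, the probability that a length-$n'$ random walk governed by $P$ from $v_{\mathrm{root}}$ (choosing edge $e$ out of $u$ with probability $P(e)/\pi(u)$) equals that prefix. *)

From HB Require Import structures.
From mathcomp Require Import all_boot all_order all_algebra.
From mathcomp Require Import all_classical all_reals exp.
Set Implicit Arguments. Unset Strict Implicit. Unset Printing Implicit Defensive.
Import Order.TTheory GRing.Theory Num.Theory.
Local Open Scope ring_scope.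

Section Graph.
Variables (V E : finType) (d : Order.disp_t) (Sigma : finOrderType d).
Variables (sig tau : E -> V) (L : E -> Sigma).

Fixpoint walk (u : V) (s : seq E) (v : V) : bool :=
  match s with
  | [::] => u == v
  | e :: s' => (sig e == u) && walk (tau e) s' v
  end.

Definition vend (u : V) (s : seq E) : V := last u (map tau s).

Definition deterministic : Prop :=
  forall e e', sig e = sig e' -> L e = L e' -> e = e'.

Definition lossless : Prop :=
  forall u v (s t : seq E), walk u s v -> walk u t v -> map L s = map L t -> s = t.

(* primitive: some power A^k (k > 0) of the adjacency matrix is entrywise
   positive, i.e. there are walks of length k between every pair of vertices *)
Definition primitive : Prop :=
  exists k : nat, (0 < k)%N /\ forall u v, exists s : seq E, size s = k /\ walk u s v.

Fixpoint lex_le (s t : seq Sigma) : bool :=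
  match s, t with
  | [::], _ => true
  | _ :: _, [::] => false
  | x :: s', y :: t' => (x < y)%O || ((x == y) && lex_le s' t')
  end.

Variable R : realType.
Variable P : E -> R.

Definition pi_ (u : V) : R := \sum_(e | sig e == u) P e.

(* p(tau(e) | sig(e)) = P(e) / pi(sig(e)) *)
Definition pcond (e : E) : R := P e / pi_ (sig e).

Definition S_ (w : seq E) (e : E) : nat := count_mem e w.

Variables (n : nat) (alpha zeta : R) (vroot : V).

Definition n' : nat := Num.truncn (alpha * n%:R).

Definition inW (w : n'.-tuple E) : bool :=
  walk vroot w (vend vroot w) &&
  [forall e, `| (S_ w e)%:R / n'%:R - P e | < zeta].

(* t is an Eulerian path from v_end(w) to v_root of the multigraph having
   n P(e) - S_w(e) copies of each edge e *)
Definition eulerian (w : n'.-tuple E) (t : (n - n').-tuple E) : bool :=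
  walk (vend vroot w) t vroot &&
  [forall e, (S_ t e)%:R == n%:R * P e - (S_ w e)%:R].

(* Phi(w): the lexicographically first such Eulerian path (None if there is
   none, which by the context never happens for w in W) *)
Definition Phi (w : n'.-tuple E) : option ((n - n').-tuple E) :=
  [pick t | eulerian w t &&
     [forall t' : (n - n').-tuple E, eulerian w t' ==> lex_le (map L t) (map L t')]].

Definition prefix_of (w : n'.-tuple E) (c : seq Sigma) : Prop :=
  inW w /\ exists t, Phi w = Some t /\ c = map L (w ++ t).

Definition in_Cpool (c : seq Sigma) : Prop := exists w, prefix_of w c.

(* P(c) with prefix w: probability that the length-n' random walk from
   v_root equals w *)
Definition Pprefix (w : seq E) : R := \prod_(e <- w) pcond e.

End Graph.

Arguments inW {V E} sig tau {R} P n alpha zeta vroot w.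
Arguments eulerian {V E} sig tau {R} P n alpha vroot w t.
Arguments Phi {V E d Sigma} sig tau L {R} P n alpha vroot w.
Arguments prefix_of {V E d Sigma} sig tau L {R} P n alpha zeta vroot w c.

(* Since ln P(w) = sum_e S_w(e) ln p(tau e | sig e), the log-ratio of two
   prefix probabilities is sum_e (S_w(e) - S_w'(e)) ln p(e).  Typicality puts
   both counts within n' zeta <= n alpha zeta of n' P(e), so they differ by at
   most 2 n alpha zeta; as every ln p(e) <= 0, the log-ratio is at most
   -2 n alpha zeta sum_e ln p(e). *)
From HB Require Import structures.
From mathcomp Require Import all_boot all_order all_algebra.
From mathcomp Require Import all_classical all_reals exp.
Set Implicit Arguments. Unset Strict Implicit. Unset Printing Implicit Defensive.
Import Order.TTheory GRing.Theory Num.Theory.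
Local Open Scope ring_scope.

Section PrefixProbability.
Variables (V E : finType) (sig : E -> V) (R : realType) (P : E -> R).
Hypothesis P_gt0 : forall e, 0 < P e.

Lemma P_le_pi (e : E) : P e <= pi_ sig P (sig e).
Proof.
rewrite /pi_ (bigD1 e) //= lerDl.
by apply: sumr_ge0 => i _; exact: ltW.
Qed.

Lemma pcond_gt0 (e : E) : 0 < pcond sig P e.
Proof. by rewrite divr_gt0 // (lt_le_trans (P_gt0 e) (P_le_pi e)). Qed.

Lemma ln_pcond_le0 (e : E) : ln (pcond sig P e) <= 0.
Proof.
apply: ln_le0.
by rewrite ler_pdivrMr ?mul1r ?P_le_pi // (lt_le_trans (P_gt0 e) (P_le_pi e)).
Qed.

Lemma Pprefix_gt0 (w : seq E) : 0 < Pprefix sig P w.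
Proof. by apply: prodr_gt0 => e _; exact: pcond_gt0. Qed.

Lemma ln_Pprefix (w : seq E) :
  ln (Pprefix sig P w) = \sum_e (S_ w e)%:R * ln (pcond sig P e).
Proof.
elim: w => [|x w IHw].
  by rewrite /Pprefix big_nil ln1 big1 // => e _; rewrite mul0r.
rewrite /Pprefix big_cons lnM ?posrE ?pcond_gt0 ?Pprefix_gt0 // IHw.
under [RHS]eq_bigr => e _ do rewrite /S_ /= natrD mulrDl.
rewrite big_split /=; congr (_ + _).
rewrite (bigD1 x) //= eqxx mul1r big1 ?addr0 // => e /negbTE.
by rewrite eq_sym => ->; rewrite mul0r.
Qed.

Lemma ln_Pprefix_ratio_le (w w' : seq E) (K : R) :
    (forall e, `|(S_ w e)%:R - (S_ w' e)%:R| <= K) ->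
  ln (Pprefix sig P w / Pprefix sig P w') <= - (K * \sum_e ln (pcond sig P e)).
Proof.
move=> dev_le.
rewrite lnM ?posrE ?invr_gt0 ?Pprefix_gt0 // lnV ?posrE ?Pprefix_gt0 //.
rewrite !ln_Pprefix -sumrB mulr_sumr -sumrN; apply: ler_sum => e _.
rewrite -mulrBl -mulrN; apply: le_trans (ler_norm _) _.
rewrite normrM (ler0_norm (ln_pcond_le0 e)).
by rewrite ler_wpM2r ?oppr_ge0 ?ln_pcond_le0.
Qed.

Lemma Pprefix_ratio_le (w w' : seq E) (K : R) :
    (forall e, `|(S_ w e)%:R - (S_ w' e)%:R| <= K) ->
  Pprefix sig P w / Pprefix sig P w'
    <= 2 `^ (- (K * \sum_e (ln (pcond sig P e) / ln 2))).
Proof.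
move=> dev_le; have ln2_gt0 : 0 < ln (2 : R) by rewrite ln_gt0 ?ltr1n.
rewrite -ler_ln ?posrE ?divr_gt0 ?powR_gt0 ?Pprefix_gt0 // ln_powR.
rewrite -mulr_suml mulrA -mulNr divfK ?gt_eqF //.
exact: ln_Pprefix_ratio_le.
Qed.

End PrefixProbability.

Lemma count_mem_dev_le (R : realFieldType) (T : eqType) (s : seq T) (x : T)
    (p z : R) :
    `|(count_mem x s)%:R / (size s)%:R - p| < z ->
  `|(count_mem x s)%:R - (size s)%:R * p| <= (size s)%:R * z.
Proof.
case: s => [|y s] dev_lt; first by rewrite /= !mul0r subr0 normr0.
have size_gt0 : 0 < (size (y :: s))%:R :> R by rewrite ltr0n.
rewrite -[X in X - _](divfK (lt0r_neq0 size_gt0)) [_ * p]mulrC -mulrBl.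
by rewrite normrM (gtr0_norm size_gt0) [_ * z]mulrC ler_pM2r // ltW.
Qed.

Section TypicalPrefixes.
Variables (V E : finType) (sig tau : E -> V) (R : realType) (P : E -> R).
Variables (n : nat) (alpha zeta : R) (vroot : V).
Hypotheses (alpha_ge0 : 0 <= alpha) (zeta_ge0 : 0 <= zeta).

Lemma n'_le : (n' n alpha)%:R <= n%:R * alpha :> R.
Proof. by rewrite /n' mulrC truncn_le mulr_ge0. Qed.

Lemma inW_count_dev_le (w : (n' n alpha).-tuple E) (e : E) :
    inW sig tau P n alpha zeta vroot w ->
  `|(S_ w e)%:R - (n' n alpha)%:R * P e| <= n%:R * alpha * zeta.
Proof.
case/andP=> _ /forallP/(_ e).
rewrite -[X in _ / X%:R](size_tuple w) => /count_mem_dev_le.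
rewrite size_tuple => /le_trans; apply.
by rewrite ler_wpM2r ?n'_le.
Qed.

Lemma inW_count_diff_le (w w' : (n' n alpha).-tuple E) (e : E) :
    inW sig tau P n alpha zeta vroot w -> inW sig tau P n alpha zeta vroot w' ->
  `|(S_ w e)%:R - (S_ w' e)%:R| <= 2 * n%:R * alpha * zeta.
Proof.
move=> w_typ w'_typ; rewrite -!mulrA mulr_natl mulr2n !mulrA.
apply: le_trans (ler_distD ((n' n alpha)%:R * P e) _ _) _.
by rewrite (distrC _ (S_ w' e)%:R) lerD ?inW_count_dev_le.
Qed.

End TypicalPrefixes.

Theorem claim1 (V E : finType) (d : Order.disp_t) (Sigma : finOrderType d)
  (sig tau : E -> V) (L : E -> Sigma) (R : realType) (P : E -> R)
  (n : nat) (alpha zeta : R) (vroot : V) :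
  deterministic sig L -> lossless sig tau L -> primitive sig tau ->
  (forall e, 0 < P e) -> \sum_e P e = 1 ->
  (forall u, \sum_(e | sig e == u) P e = \sum_(e | tau e == u) P e) ->
  (0 < n)%N -> (forall e, exists k : nat, n%:R * P e = k%:R) ->
  0 < alpha < 1 ->
  0 < zeta -> (forall e, zeta < (1 - alpha) / alpha * P e) ->
  forall c c' : seq Sigma,
    in_Cpool sig tau L P n alpha zeta vroot c ->
    in_Cpool sig tau L P n alpha zeta vroot c' ->
  forall w w',
    prefix_of sig tau L P n alpha zeta vroot w c ->
    prefix_of sig tau L P n alpha zeta vroot w' c' ->
    Pprefix sig P w / Pprefix sig P w'
      <= 2 `^ (- (2 * n%:R * alpha * zeta *
                  \sum_e (ln (pcond sig P e) / ln 2))).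
Proof.
move=> _ _ _ P_gt0 _ _ _ _ /andP[alpha_gt0 _] zeta_gt0 _ c c' _ _ w w'
  [w_typ _] [w'_typ _].
have count_diff_le e :=
  inW_count_diff_le (ltW alpha_gt0) (ltW zeta_gt0) e w_typ w'_typ.
exact: Pprefix_ratio_le count_diff_le.
Qed.
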